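(* There exists a change of section $g$ such that $\sum_{j=1}^p {}^gm_{i,j}=m$ for every $i\in\{1,\dots,p\}$ (such $g$ are called appropriate). Moreover the appropriate $g$-changed process is unique: if $g_1,g_2$ are appropriate changes of section then ${}^{g_1}\mu_{i,j}={}^{g_2}\mu_{i,j}$ for all $i,j$.
   Context: Fix integers $d,p\ge 1$. Let $(Z_n)=(A_n,M_n)$ be a Markov-additive process on $\mathbb{Z}^d\times\{1,\dots,p\}$ (a Markov chain with $\mathbb{P}_{(x,i)}((A_1,M_1)=(x',i'))=\mathbb{P}_{(0,i)}((A_1,M_1)=(x'-x,i'))$), with jump matrix $\mu_{i,j}(x)=\mathbb{P}_{(0,i)}((A_1,M_1)=(x,j))$, assumed irreducible, aperiodic (for every state, the gcd of possible return times is $1$), with finite exponential moments ($\sum_xe^{\alpha\|x\|}\mu_{i,j}(x)<\infty$ for all $\alpha>0$). The matrix $\big(\sum_x\mu_{i,j}(x)\big)_{i,j}$ is the transition matrix of $(M_n)$, with unique stationary distribution $\pi$. Local drifts $m_{i,j}=\sum_x x\mu_{i,j}(x)$, global drift $m=\sum_{i,j}\pi_im_{i,j}$. A change of section is a real $p\times d$ matrix $g$ with rows $g_1,\dots,g_p$; the $g$-changed process has jump measures ${}^g\mu_{i,j}(x)=\mu_{i,j}(x+g_j-g_i)$, $x\in\mathbb{R}^d$, and local drifts ${}^gm_{i,j}=\sum_{x\in\mathbb{R}^d}x\,{}^g\mu_{i,j}(x)$. *)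

From HB Require Import structures.
From mathcomp Require Import all_boot all_order all_algebra.
From mathcomp Require Import all_classical all_reals.
From mathcomp Require Import ereal topology normedtype sequences esum exp.
Set Implicit Arguments. Unset Strict Implicit. Unset Printing Implicit Defensive.
Import Order.TTheory GRing.Theory Num.Theory.
Local Open Scope ring_scope.
Local Open Scope classical_set_scope.

Section MAP.
Variables (R : realType) (d p : nat).

(* The jump matrix: mu i j x = P_(0,i)((A_1,M_1) = (x,j)), x in Z^d. *)
Definition jumps := 'I_p -> 'I_p -> 'rV[int]_d -> R.

(* Sum over a (possibly uncountable) index set of a real family, defined as
   (sum of positive parts) - (sum of negative parts), each computed with the
   extended-real sum esum; this is the usual sum for absolutely summable
   families. *)
Definition rsum (T : choiceType) (f : T -> R) : R :=
  fine (\esum_(x in [set: T]) (Num.max (f x) 0)%:E)%E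
  - fine (\esum_(x in [set: T]) (Num.max (- f x) 0)%:E)%E.

Definition znorm (x : 'rV[int]_d) : R := \sum_(k < d) `|x ord0 k|%:~R.

Definition trans (mu : jumps) (x : 'rV[int]_d) (i : 'I_p)
  (y : 'rV[int]_d) (j : 'I_p) : R := mu i j (y - x).

Fixpoint reach (mu : jumps) (n : nat) (x : 'rV[int]_d) (i : 'I_p)
  (y : 'rV[int]_d) (j : 'I_p) : Prop :=
  match n with
  | 0 => x = y /\ i = j
  | n'.+1 => exists (z : 'rV[int]_d) (k : 'I_p),
      0 < trans mu x i z k /\ reach mu n' z k y j
  end.

Definition irreducible (mu : jumps) : Prop :=
  forall x i y j, exists n, reach mu n x i y j.

Definition aperiodic (mu : jumps) : Prop :=
  forall x i (k : nat),
    (forall n, (0 < n)%N -> reach mu n x i x i -> (k %| n)%N) -> k = 1%N.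

Definition exp_moments (mu : jumps) : Prop :=
  forall (alpha : R), 0 < alpha -> forall i j,
    (\esum_(x in [set: 'rV[int]_d]) (expR (alpha * znorm x) * mu i j x)%:E
       < +oo)%E.

Definition is_jump_matrix (mu : jumps) : Prop :=
  (forall i j x, 0 <= mu i j x) /\
  (forall i, \sum_(j < p) \esum_(x in [set: 'rV[int]_d]) (mu i j x)%:E = 1)%E.

Definition Pmat (mu : jumps) (i j : 'I_p) : R :=
  fine (\esum_(x in [set: 'rV[int]_d]) (mu i j x)%:E)%E.

Definition stationary (mu : jumps) (pi : 'I_p -> R) : Prop :=
  (forall i, 0 <= pi i) /\ \sum_(i < p) pi i = 1 /\
  (forall j, \sum_(i < p) pi i * Pmat mu i j = pi j).

Definition zcast (x : 'rV[int]_d) : 'rV[R]_d := map_mx (fun z : int => z%:~R) x.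

Definition ldrift (mu : jumps) (i j : 'I_p) : 'rV[R]_d :=
  \row_(k < d) rsum (fun x : 'rV[int]_d => (zcast x) ord0 k * mu i j x).

Definition gdrift (mu : jumps) (pi : 'I_p -> R) : 'rV[R]_d :=
  \sum_(i < p) \sum_(j < p) pi i *: ldrift mu i j.

Definition gmu (mu : jumps) (g : 'M[R]_(p, d)) (i j : 'I_p) (x : 'rV[R]_d) : R :=
  match pselect (exists y : 'rV[int]_d, zcast y = x + row j g - row i g) with
  | left e => mu i j (projT1 (cid e))
  | right _ => 0
  end.

Definition gdrift_loc (mu : jumps) (g : 'M[R]_(p, d)) (i j : 'I_p) : 'rV[R]_d :=
  \row_(k < d) rsum (fun x : 'rV[R]_d => x ord0 k * gmu mu g i j x).

Definition appropriate (mu : jumps) (pi : 'I_p -> R) (g : 'M[R]_(p, d)) : Prop :=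
  forall i, \sum_(j < p) gdrift_loc mu g i j = gdrift mu pi.

End MAP.

From HB Require Import structures.
From mathcomp Require Import all_boot all_order all_algebra.
From mathcomp Require Import all_classical all_reals.
From mathcomp Require Import ereal topology normedtype sequences esum exp numfun.
From mathcomp Require Import lra zify.
Import Order.TTheory GRing.Theory Num.Theory.
Local Open Scope ring_scope.
Set Implicit Arguments. Unset Strict Implicit. Unset Printing Implicit Defensive.

(* The g-changed local drift is m_ij - P_ij (g_j - g_i), so g is appropriate
   iff (P - I) g = V with V_i = sum_j m_ij - m.  For an irreducible stochastic
   matrix P the maximum principle makes P-harmonic vectors constant, so P - I
   has corank one and its left kernel is spanned by pi; as pi V = 0, the system
   is solvable.  Two solutions differ by a matrix with constant columns, which
   changes no g_j - g_i and hence no g-changed jump measure. *)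

Section RealSums.
Variables (R : realType) (T : choiceType).
Local Open Scope classical_set_scope.
Implicit Types (a b f g : T -> R).

Definition fin_esum a := (\esum_(x in [set: T]) (a x)%:E < +oo)%E.
Definition abs_summable f := fin_esum (fun x => `|f x|).

Lemma fin_esum_le a b : (forall x, a x <= b x) -> fin_esum b -> fin_esum a.
Proof. by move=> ab; apply: le_lt_trans; apply: le_esum => x _; rewrite lee_fin. Qed.

Lemma fineK_esum a : (forall x, 0 <= a x) -> fin_esum a ->
  \esum_(x in [set: T]) (a x)%:E = (fine (\esum_(x in [set: T]) (a x)%:E))%:E.
Proof.
by move=> a0 fa; rewrite fineK // ge0_fin_numE //; apply: esum_ge0 => x _; rewrite lee_fin.
Qed.

Lemma esumD_EFin a b : (forall x, 0 <= a x) -> (forall x, 0 <= b x) ->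
  (\esum_(x in [set: T]) (a x + b x)%:E =
   \esum_(x in [set: T]) (a x)%:E + \esum_(x in [set: T]) (b x)%:E)%E.
Proof.
move=> a0 b0; rewrite -esumD; first by apply: eq_esum => x _; rewrite EFinD.
all: by move=> x _; rewrite lee_fin.
Qed.

Lemma fine_esumD a b : (forall x, 0 <= a x) -> (forall x, 0 <= b x) ->
  fin_esum a -> fin_esum b ->
  fine (\esum_(x in [set: T]) (a x + b x)%:E) =
  fine (\esum_(x in [set: T]) (a x)%:E) + fine (\esum_(x in [set: T]) (b x)%:E).
Proof. by move=> a0 b0 fa fb; rewrite esumD_EFin // (fineK_esum a0) // (fineK_esum b0). Qed.

Lemma fin_esumD a b : (forall x, 0 <= a x) -> (forall x, 0 <= b x) ->
  fin_esum a -> fin_esum b -> fin_esum (fun x => a x + b x).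
Proof. by move=> a0 b0 fa fb; rewrite /fin_esum esumD_EFin // lte_add_pinfty. Qed.

Lemma esumZl a c : 0 <= c -> (forall x, 0 <= a x) ->
  (\esum_(x in [set: T]) (c * a x)%:E = c%:E * \esum_(x in [set: T]) (a x)%:E)%E.
Proof.
move=> c0 a0; have [->|c_neq0] := eqVneq c 0.
  by rewrite mul0e esum1 // => x _; rewrite mul0r.
have c_gt0 : 0 < c by rewrite lt0r c_neq0.
rewrite /esum -ereal_sup_pZl //; congr ereal_sup; apply/seteqP; split => z /=.
- move=> [A A_fin <-]; exists (\sum_(x \in A) (a x)%:E)%E; first by exists A.
  by rewrite ge0_mule_fsumr //; apply: eq_fsbigr => x _; rewrite EFinM.
- move=> [w [A A_fin <-] <-]; exists A => //.
  by rewrite ge0_mule_fsumr //; apply: eq_fsbigr => x _; rewrite EFinM.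
Qed.

(* No finiteness hypothesis is needed: [fine] sends [+oo] to [0]. *)
Lemma fine_esumZl a c : 0 <= c -> (forall x, 0 <= a x) ->
  fine (\esum_(x in [set: T]) (c * a x)%:E) = c * fine (\esum_(x in [set: T]) (a x)%:E).
Proof.
move=> c0 a0; rewrite esumZl //.
case: (\esum_(x in [set: T]) (a x)%:E)%E => [r| |] /=; first by [].
  by rewrite mulry; case: sgrP => _; rewrite ?mul0e ?mul1e ?mulN1e /= mulr0.
by rewrite mulrNy; case: sgrP => _; rewrite ?mul0e ?mul1e ?mulN1e /= mulr0.
Qed.

Lemma fin_esumZl a c : 0 <= c -> (forall x, 0 <= a x) -> fin_esum a ->
  fin_esum (fun x => c * a x).
Proof. by move=> c0 a0 fa; rewrite /fin_esum esumZl // (fineK_esum a0) // -EFinM ltry. Qed.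

Lemma rsumE f : rsum f = fine (\esum_(x in [set: T]) (f^\+ x)%:E)
                        - fine (\esum_(x in [set: T]) (f^\- x)%:E).
Proof. by []. Qed.

Lemma rsum_ge0 a : (forall x, 0 <= a x) -> rsum a = fine (\esum_(x in [set: T]) (a x)%:E).
Proof.
move=> a0; rewrite rsumE [X in _ - fine X]esum1 ?subr0 => [|x _].
  by congr fine; apply: eq_esum => x _; rewrite (ge0_funrposE (D := setT)) ?inE.
by rewrite (ge0_funrnegE (D := setT)) ?inE.
Qed.

Lemma rsumZ c f : rsum (fun x => c * f x) = c * rsum f.
Proof.
have [c0|/ltW c0] := leP 0 c.
  rewrite rsumE (ge0_funrposM f c0) (ge0_funrnegM f c0).
  by rewrite (fine_esumZl c0 (funrpos_ge0 f)) (fine_esumZl c0 (funrneg_ge0 f)) -mulrBr.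
have c0' : 0 <= - c by rewrite oppr_ge0.
rewrite rsumE (le0_funrposM f c0) (le0_funrnegM f c0).
rewrite (fine_esumZl c0' (funrpos_ge0 f)) (fine_esumZl c0' (funrneg_ge0 f)).
by rewrite !mulNr opprK addrC -mulrBr.
Qed.

Lemma funrposBnegE f x : f x = f^\+ x - f^\- x.
Proof. by rewrite -{1}(funrposBneg f). Qed.

Lemma fin_esum_funrpos f : abs_summable f -> fin_esum f^\+.
Proof.
by apply: fin_esum_le => x; rewrite ge_max normr_ge0 andbT ler_norm.
Qed.

Lemma fin_esum_funrneg f : abs_summable f -> fin_esum f^\-.
Proof.
by apply: fin_esum_le => x; rewrite ge_max normr_ge0 andbT -normrN ler_norm.
Qed.

Lemma abs_summableZ c f : abs_summable f -> abs_summable (fun x => c * f x).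
Proof.
move=> sf; rewrite /abs_summable; under [fun x => _]funext do rewrite normrM.
exact: fin_esumZl.
Qed.

Lemma rsum_split f a b : (forall x, 0 <= a x) -> (forall x, 0 <= b x) ->
  fin_esum a -> fin_esum b -> (forall x, f x = a x - b x) ->
  rsum f = fine (\esum_(x in [set: T]) (a x)%:E) - fine (\esum_(x in [set: T]) (b x)%:E).
Proof.
move=> a0 b0 fin_a fin_b fE.
have fin_pos : fin_esum f^\+.
  by apply: fin_esum_le fin_a => x; rewrite ge_max a0 andbT fE gerDl oppr_le0.
have fin_neg : fin_esum f^\-.
  by apply: fin_esum_le fin_b => x; rewrite ge_max b0 andbT fE opprB gerDl oppr_le0.
have : (\esum_(x in [set: T]) (f^\+ x + b x)%:E =
        \esum_(x in [set: T]) (f^\- x + a x)%:E)%E.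
  apply: eq_esum => x _; congr EFin.
  by have := funrposBnegE f x; rewrite fE; lra.
have pos0 := funrpos_ge0 f; have neg0 := funrneg_ge0 f.
rewrite !esumD_EFin // (fineK_esum pos0) // (fineK_esum neg0) //.
rewrite (fineK_esum a0) // (fineK_esum b0) // -!EFinD rsumE => -[]; lra.
Qed.

Lemma rsumD f g : abs_summable f -> abs_summable g ->
  rsum (fun x => f x + g x) = rsum f + rsum g.
Proof.
move=> sf sg; have fp0 := funrpos_ge0 f; have fn0 := funrneg_ge0 f.
have gp0 := funrpos_ge0 g; have gn0 := funrneg_ge0 g.
have [fp fn] := (fin_esum_funrpos sf, fin_esum_funrneg sf).
have [gp gn] := (fin_esum_funrpos sg, fin_esum_funrneg sg).
rewrite (@rsum_split _ (fun x => f^\+ x + g^\+ x) (fun x => f^\- x + g^\- x)).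
- by rewrite (fine_esumD fp0 gp0) // (fine_esumD fn0 gn0) // !rsumE; lra.
- by move=> x; rewrite addr_ge0.
- by move=> x; rewrite addr_ge0.
- exact: fin_esumD.
- exact: fin_esumD.
- by move=> x; rewrite (funrposBnegE f x) (funrposBnegE g x); lra.
Qed.
End RealSums.

Section RsumReindex.
Variables (R : realType) (T U : choiceType).
Local Open Scope classical_set_scope.

Lemma esum_reindex_inj (e : T -> U) (G : U -> \bar R) : injective e ->
  (forall u, (forall t, e t <> u) -> G u = 0%E) ->
  \esum_(u in [set: U]) G u = \esum_(t in [set: T]) G (e t).
Proof.
move=> e_inj G0; rewrite -(esum_image setT e G); last by move=> x y _ _; apply: e_inj.
rewrite [RHS]esum_mkcond; apply: eq_esum => u _.
case: (pselect (exists t, e t = u)) => [[t <-]|no_t].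
  by rewrite ifT //; apply/mem_set; exists t.
rewrite ifF; first by rewrite G0 // => t etu; apply: no_t; exists t.
by apply/negbTE/negP => /set_mem [t _ etu]; apply: no_t; exists t.
Qed.

Lemma rsum_reindex_inj (e : T -> U) (F : U -> R) : injective e ->
  (forall u, (forall t, e t <> u) -> F u = 0) -> rsum F = rsum (fun t => F (e t)).
Proof.
move=> e_inj F0; rewrite /rsum (@esum_reindex_inj e (fun u => (Num.max (F u) 0)%:E)) //.
  rewrite (@esum_reindex_inj e (fun u => (Num.max (- F u) 0)%:E)) //.
  by move=> u /F0 ->; rewrite oppr0 maxxx.
by move=> u /F0 ->; rewrite maxxx.
Qed.
End RsumReindex.

Lemma solvable_of_corank1 (F : fieldType) (n k : nat) (L : 'M[F]_n) (u : 'rV[F]_n)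
    (W : 'M[F]_(n, k)) :
  (n <= (\rank L).+1)%N -> u *m L = 0 -> u != 0 -> u *m W = 0 ->
  exists X, L *m X = W.
Proof.
move=> rankL uL u_neq0 uW.
(* The rows of L^T lie in the annihilator of u^T and, by the rank bound, span it. *)
have sLker : (L^T <= kermx u^T)%MS by apply/sub_kermxP; rewrite -trmx_mul uL trmx0.
have skerL : (kermx u^T <= L^T)%MS.
  rewrite -(mxrank_leqif_sup sLker).2 eqn_leq mxrankS //.
  by rewrite mxrank_ker !mxrank_tr rank_rV u_neq0; lia.
have /submxP [D WE] : (W^T <= L^T)%MS.
  by apply: submx_trans skerL; apply/sub_kermxP; rewrite -trmx_mul uW trmx0.
by exists D^T; rewrite -[W]trmxK WE trmx_mul trmxK.
Qed.

Section IrreducibleStochastic.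
Variables (R : realFieldType) (n : nat) (P : 'M[R]_n).
Hypotheses (P_ge0 : forall i j, 0 <= P i j) (P_sum1 : forall i, \sum_j P i j = 1).
Hypothesis P_irr : forall i j, connect [rel a b | 0 < P a b] i j.

Lemma harmonic_max_closed (u : 'I_n -> R) (M : R) a b :
  (forall i, \sum_j P i j * u j = u i) -> (forall i, u i <= M) ->
  u a = M -> 0 < P a b -> u b = M.
Proof.
move=> u_harm u_le ua Pab.
have : \sum_j P a j * (M - u j) = 0.
  under eq_bigr do rewrite mulrBr.
  by rewrite sumrB -mulr_suml P_sum1 mul1r u_harm ua subrr.
have terms_ge0 j : true -> 0 <= P a j * (M - u j) by rewrite mulr_ge0 ?subr_ge0.
move/(psumr_eq0P terms_ge0) => /(_ b isT) /eqP.
by rewrite mulf_eq0 gt_eqF //= subr_eq0 => /eqP ->.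
Qed.

Lemma harmonic_const (u : 'I_n -> R) :
  (forall i, \sum_j P i j * u j = u i) -> forall i j, u i = u j.
Proof.
move=> u_harm i j; pose i0 := [arg max_(k > i) u k]%O.
have u_le k : u k <= u i0 by rewrite /i0; case: arg_maxP => // m _; apply.
suff u_max k : u k = u i0 by rewrite !u_max.
have max_last a s : u a = u i0 -> path [rel a b | 0 < P a b] a s -> u (last a s) = u i0.
  elim: s a => [//|b s IHs] a ua /= /andP[Pab s_path].
  by apply: IHs s_path; apply: harmonic_max_closed Pab.
by have /connectP [s s_path ->] := P_irr i0 k; apply: max_last.
Qed.

Lemma harmonic_rows k (X : 'M[R]_(n, k)) :
  (P - 1%:M) *m X = 0 -> forall i j, row i X = row j X.
Proof.
rewrite mulmxBl mul1mx => /eqP; rewrite subr_eq0 => /eqP PX i j.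
apply/rowP => l; rewrite !mxE; apply: (@harmonic_const (fun a => X a l)) => a.
by rewrite -{2}PX mxE.
Qed.

Lemma rank_subr1 : (n <= (\rank (P - 1%:M)%R).+1)%N.
Proof.
have [n0|n_gt0] := posnP n; first by rewrite {1}n0.
have ker_const : (kermx (P - 1%:M)^T <= (const_mx 1 : 'rV[R]_n))%MS.
  apply/row_subP => r; set u := row r _.
  have : (P - 1%:M) *m u^T = 0.
    by rewrite -[P - _]trmxK -trmx_mul -row_mul mulmx_ker row0 trmx0.
  move/harmonic_rows => u_const.
  have -> : u = u ord0 (Ordinal n_gt0) *: const_mx 1.
    apply/rowP => j; rewrite !mxE mulr1.
    by move: (u_const j (Ordinal n_gt0)) => /rowP /(_ ord0); rewrite !mxE.
  by rewrite scalemx_sub.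
have := mxrankS ker_const; rewrite mxrank_ker mxrank_tr.
by have := rank_leq_row (const_mx 1 : 'rV[R]_n); lia.
Qed.
End IrreducibleStochastic.

Section JumpMatrix.
Variables (R : realType) (d p : nat) (mu : jumps R d p).
Hypotheses (mu_jump : is_jump_matrix mu) (mu_exp : exp_moments mu).
Local Open Scope classical_set_scope.

Lemma mu_ge0 i j x : 0 <= mu i j x.
Proof. exact: mu_jump.1. Qed.

Lemma fin_esum_mu i j : fin_esum (mu i j).
Proof.
apply: le_lt_trans (ltry 1); rewrite -(mu_jump.2 i) (bigD1 j) //= leeDl //.
by apply: sume_ge0 => k _; apply: esum_ge0 => x _; rewrite lee_fin mu_ge0.
Qed.

Lemma esum_muE i j : \esum_(x in [set: 'rV[int]_d]) (mu i j x)%:E = (Pmat mu i j)%:E.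
Proof. exact/fineK_esum/fin_esum_mu/mu_ge0. Qed.

Lemma Pmat_ge0 i j : 0 <= Pmat mu i j.
Proof. by rewrite -lee_fin -esum_muE; apply: esum_ge0 => x _; rewrite lee_fin mu_ge0. Qed.

Lemma sum_Pmat i : \sum_(j < p) Pmat mu i j = 1.
Proof. by have := mu_jump.2 i; under eq_bigr do rewrite esum_muE; rewrite sumEFin => -[]. Qed.

Lemma Pmat_gt0 i j y : 0 < mu i j y -> 0 < Pmat mu i j.
Proof.
move=> mu_gt0; apply: lt_le_trans mu_gt0 _; rewrite -lee_fin -esum_muE.
apply: esum_ge; exists [set y]; first by split => //; apply: finite_set1.
by rewrite fsbig_set1.
Qed.

Lemma rsum_mu i j : rsum (mu i j) = Pmat mu i j.
Proof. exact/rsum_ge0/mu_ge0. Qed.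

Lemma abs_summable_mu i j : abs_summable (mu i j).
Proof. by apply: fin_esum_le (fin_esum_mu i j) => x; rewrite ger0_norm ?mu_ge0. Qed.

Lemma abs_summable_drift i j (k : 'I_d) :
  abs_summable (fun y : 'rV[int]_d => zcast R y ord0 k * mu i j y).
Proof.
apply: fin_esum_le (mu_exp ltr01 i j) => y.
rewrite normrM (ger0_norm (mu_ge0 i j y)) ler_wpM2r ?mu_ge0 // mul1r.
apply: le_trans (expR_ge1Dx _); rewrite /zcast mxE -intr_norm.
have : (`|y ord0 k|%:~R : R) <= znorm R y.
  by rewrite /znorm (bigD1 k) //= lerDl; apply: sumr_ge0 => l _; rewrite ler0z.
lra.
Qed.

Lemma zcast_inj : injective (@zcast R d).
Proof.
move=> y1 y2 /rowP y12; apply/rowP => l.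
by have := y12 l; rewrite /zcast !mxE => /intr_inj.
Qed.

Lemma gmu_shift (g : 'M[R]_(p, d)) i j y :
  gmu mu g i j (zcast R y - (row j g - row i g)) = mu i j y.
Proof.
rewrite /gmu; case: pselect => [e|[]]; last by exists y; rewrite -addrA subrK.
by case: cid => y' /= y'E; congr (mu i j); apply: zcast_inj; rewrite y'E -addrA subrK.
Qed.

Lemma gmu_out (g : 'M[R]_(p, d)) i j u :
  (forall y, zcast R y - (row j g - row i g) <> u) -> gmu mu g i j u = 0.
Proof.
move=> u_out; rewrite /gmu; case: pselect => [e|//].
by case: cid => y /= yE; case: (u_out y); rewrite yE -(addrA u) addrK.
Qed.

Lemma gmu_eq (g1 g2 : 'M[R]_(p, d)) i j :
  row i (g1 - g2) = row j (g1 - g2) -> gmu mu g1 i j = gmu mu g2 i j.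
Proof.
move=> /rowP g12; have e : row j g1 - row i g1 = row j g2 - row i g2.
  by apply/rowP => k; have := g12 k; rewrite !mxE; lra.
by apply: funext => x; rewrite /gmu -!addrA e.
Qed.

Lemma gdrift_locE (g : 'M[R]_(p, d)) i j :
  gdrift_loc mu g i j = ldrift mu i j - Pmat mu i j *: (row j g - row i g).
Proof.
set c := row j g - row i g; apply/rowP => k; rewrite !mxE.
rewrite (@rsum_reindex_inj _ _ _ (fun y => zcast R y - c)); first last.
- by move=> u u_out; rewrite gmu_out ?mulr0.
- by move=> y1 y2 /addIr /zcast_inj.
have -> : (fun y => (zcast R y - c) ord0 k * gmu mu g i j (zcast R y - c)) =
    (fun y => zcast R y ord0 k * mu i j y + (- c ord0 k) * mu i j y).
  by apply: funext => y; rewrite gmu_shift !mxE mulrDl mulNr.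
rewrite rsumD ?rsumZ ?rsum_mu ?abs_summableZ ?abs_summable_mu ?abs_summable_drift //.
by rewrite /c !mxE mulNr mulrC.
Qed.
End JumpMatrix.

Section DriftEquation.
Variables (R : realType) (d p : nat) (mu : jumps R d p) (pi : 'I_p -> R).

Definition Pmx : 'M[R]_p := \matrix_(i, j) Pmat mu i j.

Definition drift_defect : 'M[R]_(p, d) :=
  \matrix_(i < p) (\sum_(j < p) ldrift mu i j - gdrift mu pi).

Hypotheses (mu_jump : is_jump_matrix mu) (mu_exp : exp_moments mu).

Lemma appropriateE (g : 'M[R]_(p, d)) :
  appropriate mu pi g <-> (Pmx - 1%:M) *m g = drift_defect.
Proof.
have rowE i : row i ((Pmx - 1%:M) *m g) = \sum_j Pmat mu i j *: row j g - row i g.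
  rewrite mulmxBl mul1mx linearB /= row_mul mulmx_sum_row.
  by congr (_ - _); apply: eq_bigr => j _; rewrite !mxE.
have sum_gdrift i : \sum_j gdrift_loc mu g i j =
    \sum_j ldrift mu i j - (\sum_j Pmat mu i j *: row j g - row i g).
  under eq_bigr do rewrite gdrift_locE // scalerBr.
  by rewrite sumrB sumrB -scaler_suml sum_Pmat // scale1r.
split => [g_app | gE i].
  by apply/row_matrixP => i; rewrite rowE rowK -(g_app i) sum_gdrift subKr.
by rewrite sum_gdrift -rowE gE rowK subKr.
Qed.

Lemma Pmx_ge0 i j : 0 <= Pmx i j.
Proof. by rewrite mxE Pmat_ge0. Qed.

Lemma Pmx_sum1 i : \sum_j Pmx i j = 1.
Proof. by under eq_bigr do rewrite mxE; exact: sum_Pmat. Qed.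

Lemma reach_connect n x i y j :
  reach mu n x i y j -> connect [rel a b | 0 < Pmx a b] i j.
Proof.
elim: n x i => [|n IHn] x i /=; first by case=> _ ->.
case=> z [k [mu_gt0 /IHn k_to_j]]; apply: connect_trans k_to_j.
by apply: connect1; rewrite /= mxE (Pmat_gt0 mu_jump mu_gt0).
Qed.

Lemma irreducible_connect : irreducible mu ->
  forall i j, connect [rel a b | 0 < Pmx a b] i j.
Proof. by move=> mu_irr i j; have [n] := mu_irr 0 i 0 j; apply: reach_connect. Qed.

Hypothesis pi_stat : stationary mu pi.

Lemma stationary_neq0 : \row_i pi i != 0.
Proof.
apply: contra_neq (@oner_neq0 R) => pi0; rewrite -pi_stat.2.1.
by apply: big1 => i _; have := congr1 (fun v : 'rV_p => v ord0 i) pi0; rewrite !mxE.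
Qed.

Lemma stationary_mulmx : (\row_i pi i) *m (Pmx - 1%:M) = 0.
Proof.
apply/rowP => j; rewrite mulmxBr mulmx1 !mxE -[RHS](subrr (pi j)).
by congr (_ - _); rewrite -[RHS](pi_stat.2.2 j); apply: eq_bigr => i _; rewrite !mxE.
Qed.

Lemma stationary_drift_defect : (\row_i pi i) *m drift_defect = 0.
Proof.
rewrite mulmx_sum_row; under eq_bigr do rewrite mxE rowK scalerBr.
rewrite sumrB -scaler_suml pi_stat.2.1 scale1r /gdrift.
by under eq_bigr do rewrite scaler_sumr; rewrite subrr.
Qed.
End DriftEquation.

Unset Implicit Arguments.

Theorem proposition2p6 (R : realType) (d p : nat) (mu : jumps R d p)
  (pi : 'I_p -> R) :
  (1 <= d)%N -> (1 <= p)%N ->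
  is_jump_matrix mu -> irreducible mu -> aperiodic mu -> exp_moments mu ->
  stationary mu pi ->
  (exists g : 'M[R]_(p, d), appropriate mu pi g) /\
  (forall g1 g2 : 'M[R]_(p, d), appropriate mu pi g1 -> appropriate mu pi g2 ->
     forall i j, gmu mu g1 i j = gmu mu g2 i j).
Proof.
move=> _ _ mu_jump mu_irr _ mu_exp pi_stat.
have P_ge0 := Pmx_ge0 mu_jump; have P_sum1 := Pmx_sum1 mu_jump.
have P_irr := irreducible_connect mu_jump mu_irr.
split.
  have [g gE] := solvable_of_corank1 (rank_subr1 P_ge0 P_sum1 P_irr)
    (stationary_mulmx pi_stat) (stationary_neq0 pi_stat) (stationary_drift_defect pi_stat).
  by exists g; apply/(appropriateE pi mu_jump mu_exp).
move=> g1 g2 /(appropriateE pi mu_jump mu_exp) g1E /(appropriateE pi mu_jump mu_exp) g2E i j.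
apply/gmu_eq/(harmonic_rows P_ge0 P_sum1 P_irr).
by rewrite mulmxBr g1E g2E subrr.
Qed.
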